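(* Let $\mathrm P$ be a polymatroid on $E$ of type $\mathbf a$. Then the support of the augmented Bergman fan $\Sigma_{\mathrm P}$ (a subfan of $\Sigma_{\mathbf a}$) equals the support of the augmented Bergman fan $\Sigma_{\mathrm M_\pi(\mathrm P)}$ of the multisymmetric lift (a subfan of the stellahedral fan $\Sigma_{\widetilde E}$); more precisely, $\Sigma_{\mathrm P}$ is the coarsening of $\Sigma_{\mathrm M_\pi(\mathrm P)}$ which is a subfan of $\Sigma_{\mathbf a}$.
   Context: $E=\{1,\dots,m\}$, $\mathbf a\in\mathbb Z_{\ge0}^m$, $n=\sum a_i$. Polymatroid $\mathrm P$ of type $\mathbf a$: submodular monotone $\operatorname{rk}_{\mathrm P}:2^E\to\mathbb Z_{\ge0}$ with $\operatorname{rk}_{\mathrm P}(\emptyset)=0$, $\operatorname{rk}_{\mathrm P}(\{i\})\le a_i$. Flats: $F$ with $\operatorname{rk}(F\cup e)>\operatorname{rk}(F)$ for $e\notin F$. $\widetilde E$ is an $n$-element set, $\pi:\widetilde E\to E$ with $|\pi^{-1}(i)|=a_i$; $\mathbf e_U=\sum_{j\in U}\mathbf e_j\in\mathbb R^{\widetilde E}$. For any map $\pi:\widetilde E\to E$, a compatible pair $I\le\mathcal F$ is $I\subseteq\widetilde E$ and a chain $\mathcal F=\{F_1\subsetneq\dots\subsetneq F_{k+1}=E\}$ ($k\ge0$) with $\pi^{-1}(A)\subseteq I\Rightarrow A\subseteq F_1$; the fan $\Sigma_\pi$ has cones $\sigma_{I\le\mathcal F}=\operatorname{cone}(-\mathbf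 e_{\widetilde E\setminus\pi^{-1}(F_1)},\dots,-\mathbf e_{\widetilde E\setminus\pi^{-1}(F_k)},\mathbf e_j:j\in I)$. $\Sigma_{\mathbf a}=\Sigma_\pi$; the stellahedral fan $\Sigma_{\widetilde E}$ is $\Sigma_{\mathrm{id}}$ for $\mathrm{id}:\widetilde E\to\widetilde E$. The augmented Bergman fan $\Sigma_{\mathrm P}$ is the subfan of $\Sigma_{\mathbf a}$ of cones $\sigma_{S\le\mathcal F}$ with $S\subseteq\widetilde E$, $F_1,\dots,F_k$ proper flats of $\mathrm P$, such that (1) $\operatorname{rk}_{\mathrm P}(\pi(T))\ge|T|$ for all $T\subseteq S$ and (2) $\operatorname{rk}_{\mathrm P}(F\cup\pi(T))>\operatorname{rk}_{\mathrm P}(F)+|T|$ for all $F\in\mathcal F$ and nonempty $T\subseteq S\setminus\pi^{-1}(F)$. The multisymmetric lift $\mathrm M_\pi(\mathrm P)$ is the matroid on $\widetilde E$ with rank function $\operatorname{rk}(U)=\min_{A\subseteq E}\{\operatorname{rk}_{\mathrm P}(A)+|U\setminus\pi^{-1}(A)|\}$. For a matroid $\mathrm M$ on $\widetilde E$, its augmented Bergman fan $\Sigma_{\mathrm M}$ is the subfan of $\Sigma_{\widetilde E}$ of cones $\sigma_{I\le\mathcal F}$ with $I$ independent in $\mathrm M$, $\mathcal F$ a chain of proper flats of $\mathrm M$ (plus the ground set) and $I\subseteq F_1$. *)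

From HB Require Import structures.
From mathcomp Require Import all_boot all_order all_algebra.
From mathcomp Require Import reals.
Set Implicit Arguments. Unset Strict Implicit. Unset Printing Implicit Defensive.
Import Order.TTheory GRing.Theory Num.Theory.
Local Open Scope ring_scope.

Definition polymatroid (m : nat) (a : 'I_m -> nat) (rk : {set 'I_m} -> nat) : Prop :=
  [/\ rk set0 = 0%N,
      (forall A B : {set 'I_m}, A \subset B -> (rk A <= rk B)%N),
      (forall A B : {set 'I_m}, (rk (A :|: B) + rk (A :&: B) <= rk A + rk B)%N)
    & (forall i : 'I_m, (rk [set i] <= a i)%N)].

Definition is_flat (T : finType) (rk : {set T} -> nat) (F : {set T}) : Prop :=
  forall e : T, e \notin F -> (rk F < rk (e |: F))%N.

(* Multisymmetric lift: rank function on subsets of E~ = 'I_n,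
   rk(U) = min_{A subset E} rk_P(A) + |U \ pi^{-1}(A)|.
   (The neutral element rk_P(E) of the min is the value of the term at A = E,
    so this is exactly the minimum over all A.) *)
Definition lift_rank (m n : nat) (pi : 'I_n -> 'I_m) (rk : {set 'I_m} -> nat)
  (U : {set 'I_n}) : nat :=
  \big[minn/rk setT]_(A : {set 'I_m}) (rk A + #|U :\: pi @^-1: A|)%N.

Definition independent (T : finType) (rk : {set T} -> nat) (I : {set T}) : Prop :=
  rk I = #|I|.

Definition evec (R : realType) (n : nat) (U : {set 'I_n}) : 'rV[R]_n :=
  \row_j (j \in U)%:R.

Definition in_cone (R : realType) (n : nat) (g : seq 'rV[R]_n) (x : 'rV[R]_n) : Prop :=
  exists lam : 'I_(size g) -> R,
    (forall i, 0 <= lam i) /\ x = \sum_(i < size g) lam i *: g`_i.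

(* A chain F_1 ⊊ ... ⊊ F_k of proper subsets (F_{k+1} = E is implicit),
   represented by the list [:: F_1; ...; F_k]. *)
Definition proper_chain (T : finType) (Fs : seq {set T}) : Prop :=
  sorted (fun A B : {set T} => A \proper B) Fs /\
  (forall F, F \in Fs -> F \proper [set: T]).

Definition chain_bottom (T : finType) (Fs : seq {set T}) : {set T} :=
  head [set: T] Fs.

Definition compatible (T : finType) (n : nat) (pi : 'I_n -> T)
  (I : {set 'I_n}) (Fs : seq {set T}) : Prop :=
  forall A : {set T}, pi @^-1: A \subset I -> A \subset chain_bottom Fs.

Definition cone_gens (R : realType) (T : finType) (n : nat) (pi : 'I_n -> T)
  (I : {set 'I_n}) (Fs : seq {set T}) : seq 'rV[R]_n :=
  [seq - evec R (~: (pi @^-1: F)) | F : {set T} <- Fs] ++ [seq evec R [set j] | j <- enum I].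

Definition cone_of (R : realType) (T : finType) (n : nat) (pi : 'I_n -> T)
  (I : {set 'I_n}) (Fs : seq {set T}) : 'rV[R]_n -> Prop :=
  in_cone (cone_gens R pi I Fs).

Definition Sigma_pi_idx (T : finType) (n : nat) (pi : 'I_n -> T)
  (I : {set 'I_n}) (Fs : seq {set T}) : Prop :=
  proper_chain Fs /\ compatible pi I Fs.

Definition Sigma_P_idx (m n : nat) (pi : 'I_n -> 'I_m) (rk : {set 'I_m} -> nat)
  (S : {set 'I_n}) (Fs : seq {set 'I_m}) : Prop :=
  [/\ Sigma_pi_idx pi S Fs,
      (forall F, F \in Fs -> is_flat rk F),
      (forall T : {set 'I_n}, T \subset S -> (#|T| <= rk (pi @: T))%N)
    & (forall F, F \in rcons Fs [set: 'I_m] ->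
        forall T : {set 'I_n}, T \subset S :\: pi @^-1: F -> T != set0 ->
          (rk F + #|T| < rk (F :|: pi @: T))%N)].

Definition Sigma_M_idx (n : nat) (rkM : {set 'I_n} -> nat)
  (I : {set 'I_n}) (Fs : seq {set 'I_n}) : Prop :=
  [/\ Sigma_pi_idx id I Fs,
      independent rkM I,
      (forall F, F \in Fs -> is_flat rkM F)
    & I \subset chain_bottom Fs].

From HB Require Import structures.
From mathcomp Require Import all_boot all_order all_algebra.
From mathcomp Require Import reals.
From mathcomp Require Import zify.
Set Implicit Arguments. Unset Strict Implicit. Unset Printing Implicit Defensive.
Import Order.TTheory GRing.Theory Num.Theory.

(* Every G ⊆ E~ splits as pi^-1(F) ⊔ J, where F = fibre_core G collects
   the elements whose whole fibre lies in G; when G is a flat of M_pi(P), F is a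
   flat of P and rk_M G = rk_P F + |J|.
   A point x of a cone sigma_{S<=F} of Sigma_P is a nonincreasing step function
   of the chain level plus nonnegative bumps on S.  Its superlevel sets
   {x >= t}, t <= 0, therefore have the form pi^-1(F_i) ⊔ J with J ⊆ S, and
   condition (2) makes them flats of the lift; with the positive support of x,
   which is independent by condition (1), they span a stellahedral cone of
   Sigma_{M_pi(P)} containing x.
   Conversely, a cone sigma_{I<=G_1⊊...⊊G_k} of Sigma_{M_pi(P)} lies in
   sigma_{S<=F} for F_i = fibre_core G_i and S = I ∪ ⋃ J_i, because
   -e_{~G} = -e_{~pi^-1 F} + e_{G \ pi^-1 F}; the rank identity of the flats G_i
   combined with submodularity yields conditions (1) and (2) for S. *)

(* The same cardinal or rank is often elaborated with syntactically different
   coercions, which [lia] would treat as distinct atoms; [set] identifies them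
   up to conversion first. *)
Ltac abstract_cards := repeat match goal with |- context [@card.body ?T ?A] =>
  let c := fresh "c" in set c := @card.body T A; clearbody c end.
Ltac abstract_apps f := repeat match goal with |- context [f ?A] =>
  let r := fresh "r" in set r := f A; clearbody r end.
Tactic Notation "card_lia" constr(f) := abstract_cards; abstract_apps f; lia.
Tactic Notation "card_lia" constr(f) constr(g) :=
  abstract_cards; abstract_apps f; abstract_apps g; lia.

Section Cones.
Local Open Scope ring_scope.
Variables (R : realType) (n : nat).
Implicit Types (g : seq 'rV[R]_n) (x v : 'rV[R]_n).

Lemma in_cone_ind g (P : 'rV[R]_n -> Prop) x :
  P 0 -> (forall u v, P u -> P v -> P (u + v)) ->
  (forall c v, 0 <= c -> P v -> P (c *: v)) ->
  (forall v, v \in g -> P v) -> in_cone g x -> P x.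
Proof.
move=> P0 PD PZ Pg [lam [lam_ge0 ->]].
by apply: (big_ind P) => // i _; apply: PZ => //; apply/Pg/mem_nth.
Qed.

Lemma in_cone0 g : in_cone g 0.
Proof. by exists (fun=> 0); split=> //; rewrite big1 // => i _; rewrite scale0r. Qed.

Lemma in_coneD g u v : in_cone g u -> in_cone g v -> in_cone g (u + v).
Proof.
move=> [l1 [l1_ge0 ->]] [l2 [l2_ge0 ->]]; exists (fun i => l1 i + l2 i); split.
  by move=> i; rewrite addr_ge0.
by rewrite -big_split; apply: eq_bigr => i _; rewrite scalerDl.
Qed.

Lemma in_coneZ g c v : 0 <= c -> in_cone g v -> in_cone g (c *: v).
Proof.
move=> c_ge0 [l [l_ge0 ->]]; exists (fun i => c * l i); split.
  by move=> i; rewrite mulr_ge0.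
by rewrite scaler_sumr; apply: eq_bigr => i _; rewrite scalerA.
Qed.

Lemma in_cone_mem g v : v \in g -> in_cone g v.
Proof.
move=> vg; have iv : (index v g < size g)%N by rewrite index_mem.
exists (fun i => (i == Ordinal iv)%:R); split=> [i|]; first exact: ler0n.
rewrite (bigD1 (Ordinal iv)) //= eqxx scale1r big1 ?addr0 ?nth_index // => i.
by move=> /negbTE ->; rewrite scale0r.
Qed.

Lemma in_cone_sum g (I : Type) (r : seq I) (P : pred I) (F : I -> 'rV[R]_n) :
  (forall i, P i -> in_cone g (F i)) -> in_cone g (\sum_(i <- r | P i) F i).
Proof. by move=> gF; apply: big_ind => //; [apply: in_cone0 | apply: in_coneD]. Qed.

Lemma in_cone_trans g1 g2 x :
  (forall v, v \in g1 -> in_cone g2 v) -> in_cone g1 x -> in_cone g2 x.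
Proof.
move=> g12; apply: in_cone_ind => //; first exact: in_cone0.
  exact: in_coneD.
exact: in_coneZ.
Qed.

Lemma evecE (U : {set 'I_n}) j : evec R U 0 j = (j \in U)%:R.
Proof. by rewrite mxE. Qed.

Lemma evec_sum1 (U : {set 'I_n}) : evec R U = \sum_(j in U) evec R [set j].
Proof.
apply/rowP => k; rewrite summxE evecE; case: (boolP (k \in U)) => kU.
  rewrite (bigD1 k) //= evecE inE eqxx big1 ?addr0 // => j /andP [_ jk].
  by rewrite evecE inE eq_sym (negbTE jk).
by rewrite big1 // => j jU; rewrite evecE inE; case: eqP => // kj; rewrite kj jU in kU.
Qed.

Lemma row_sum_evec1 x : x = \sum_(j < n) x 0 j *: evec R [set j].
Proof.
apply/rowP => k; rewrite summxE (bigD1 k) //= !mxE inE eqxx mulr1 big1 ?addr0 //.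
by move=> j /negbTE jk; rewrite !mxE inE eq_sym jk mulr0.
Qed.

Lemma oppr_evecC_split (G H : {set 'I_n}) :
  H \subset G -> - evec R (~: G) = - evec R (~: H) + evec R (G :\: H).
Proof.
move=> HG; apply/rowP => k; rewrite !mxE !inE.
case: (boolP (k \in H)) => kH; first by rewrite (subsetP HG k kH) /= oppr0 addr0.
by case: (k \in G); rewrite /= ?addNr ?oppr0 ?addr0.
Qed.

End Cones.

Lemma cone_gens_cons (R : realType) (T : finType) (n : nat) (pi : 'I_n -> T)
    (I : {set 'I_n}) (F : {set T}) (Fs : seq {set T}) :
  cone_gens R pi I (F :: Fs) = (- evec R (~: pi @^-1: F))%R :: cone_gens R pi I Fs.
Proof. by []. Qed.

Section Chains.
Variable T : finType.
Implicit Types (s : seq {set T}) (A F : {set T}).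

Let subset_rel_trans : transitive (fun A B : {set T} => A \subset B).
Proof. by move=> B A C; apply: subset_trans. Qed.

Lemma preimset_id A : id @^-1: A = A.
Proof. by apply/setP => i; rewrite inE. Qed.

Lemma sorted_proper_subset s :
  sorted (fun A B => A \proper B) s -> sorted (fun A B => A \subset B) s.
Proof. by apply: sub_sorted => A B /proper_sub. Qed.

Lemma path_subset_head A s :
  path (fun A B => A \subset B) A s -> forall F, F \in s -> A \subset F.
Proof. by move/(order_path_min subset_rel_trans)/allP. Qed.

Lemma sorted_undup_proper s :
  sorted (fun A B => A \subset B) s -> sorted (fun A B => A \proper B) (undup s).
Proof.
move=> s_sorted; have := subseq_sorted subset_rel_trans (undup_subseq s) s_sorted.
move: (undup_uniq s); case: (undup s) => //= A s'.
elim: s' A => //= B s' IH A /andP [A_s' uniq_s'] /andP [AB path_s'].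
rewrite IH // andbT properEneq AB andbT.
by apply: contraNneq A_s' => ->; rewrite mem_head.
Qed.

Lemma sub_chain_bottom A s : (forall F, F \in s -> A \subset F) -> A \subset chain_bottom s.
Proof. by case: s => [|F s] /= As; [apply: subsetT | apply/As/mem_head]. Qed.

Lemma chain_bottom_sub s F :
  sorted (fun A B => A \subset B) s -> F \in s -> chain_bottom s \subset F.
Proof.
case: s => // F1 s /= s_path; rewrite in_cons => /orP [/eqP -> // | F_s].
exact: path_subset_head s_path F F_s.
Qed.

Definition chain_level s (i : T) : nat := find (fun F => i \in F) s.

Lemma mem_nth_chain s (i : T) k :
  sorted (fun A B => A \subset B) s -> (k < size s)%N ->
  (i \in nth set0 s k) = (chain_level s i <= k)%N.
Proof.
move=> s_sorted ks; apply/idP/idP => [ik|lev_k].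
  by rewrite leqNgt; apply: contraTN ik => /(before_find set0) ->.
have s_i : has (fun F => i \in F) s by rewrite has_find (leq_ltn_trans lev_k).
have lev_s : (chain_level s i < size s)%N by rewrite (leq_ltn_trans lev_k).
have := sorted_leq_nth subset_rel_trans (@subxx _ _) set0 s_sorted.
move=> /(_ (chain_level s i) k); rewrite !inE => /(_ lev_s ks lev_k) /subsetP.
by move=> /(_ i (nth_find set0 s_i)).
Qed.

Lemma superlevel_chain (R : realType) s (phi : nat -> R) (t : R) :
  sorted (fun A B => A \subset B) s -> phi 0%N = 0%R ->
  {homo phi : k l / (k <= l)%N >-> (l <= k)%R} -> (t <= 0)%R ->
  [set i | (t <= phi (chain_level s i))%R] = setT \/
  [set i | (t <= phi (chain_level s i))%R] \in s.
Proof.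
move=> s_sorted phi0 phi_dec t_le0.
pose P k := (k <= size s)%N && (t <= phi k)%R.
have P0 : exists k, P k by exists 0%N; rewrite /P leq0n phi0 t_le0.
have P_le k : P k -> (k <= size s)%N by case/andP.
have [K /andP [Ks tK] K_max] := ex_maxnP P0 P_le.
have level_le i : (t <= phi (chain_level s i))%R = (chain_level s i <= K)%N.
  apply/idP/idP => [ti | /phi_dec]; last exact: le_trans.
  by apply: K_max; rewrite /P ti find_size.
have [Ks' | sK] := ltnP K (size s).
  right; suff -> : [set i | (t <= phi (chain_level s i))%R] = nth set0 s K by apply: mem_nth.
  by apply/setP => i; rewrite inE level_le mem_nth_chain.
by left; apply/setP => i; rewrite !inE level_le (leq_trans (find_size _ _)).
Qed.

End Chains.

Section Superlevels.
Local Open Scope ring_scope.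
Variables (R : realType) (n : nat).
Implicit Types (x : 'rV[R]_n) (s t : R) (A B G : {set 'I_n}).

Definition superlevel t x : {set 'I_n} := [set j | t <= x 0 j].
Definition pos_support x : {set 'I_n} := [set j | 0 < x 0 j].
Definition neg_support x : {set 'I_n} := [set j | x 0 j < 0].

Lemma nonneg_in_cone_pos_support x :
  (forall j, 0 <= x 0 j) ->
  in_cone [seq evec R [set j] | j <- enum (pos_support x)] x.
Proof.
move=> x_ge0; rewrite [X in in_cone _ X]row_sum_evec1; apply: in_cone_sum => j _.
have [xj_gt0 | xj_le0] := ltP 0 (x 0 j).
  by apply: in_coneZ (ltW xj_gt0) (in_cone_mem _); apply/mapP; exists j; rewrite ?mem_enum ?inE.
have -> : x 0 j = 0 by apply/eqP; rewrite eq_le xj_le0 x_ge0.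
by rewrite scale0r; apply: in_cone0.
Qed.

Definition raise_negatives x t : 'rV[R]_n := x - t *: evec R (~: superlevel 0 x).

Lemma raise_negativesE x t j :
  raise_negatives x t 0 j = if 0 <= x 0 j then x 0 j else x 0 j - t.
Proof. by rewrite !mxE !inE; case: (0 <= x 0 j); rewrite /= ?mulr0 ?subr0 ?mulr1. Qed.

Section RaiseStep.
Variables (x : 'rV[R]_n) (j0 : 'I_n).
Hypothesis x_j0_lt0 : x 0 j0 < 0.
Hypothesis x_j0_max : forall j, x 0 j < 0 -> x 0 j <= x 0 j0.
Let x' := raise_negatives x (x 0 j0).

Lemma raise_neg_support : neg_support x' \proper neg_support x.
Proof.
rewrite properE; apply/andP; split.
  apply/subsetP => j; rewrite !inE raise_negativesE.
  by have [xj_ge0 | //] := leP 0 (x 0 j); rewrite ltNge xj_ge0.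
apply/subsetPn; exists j0; rewrite !inE ?x_j0_lt0 // raise_negativesE.
by rewrite leNgt x_j0_lt0 /= subrr ltxx.
Qed.

Lemma raise_pos_support : pos_support x' = pos_support x.
Proof.
apply/setP => j; rewrite !inE raise_negativesE.
have [// | xj_lt0] := leP 0 (x 0 j).
by rewrite subr_gt0 !ltNge x_j0_max // (ltW xj_lt0).
Qed.

Lemma raise_superlevel s : s <= 0 -> superlevel s x' = superlevel (s + x 0 j0) x.
Proof.
move=> s_le0; apply/setP => j; rewrite !inE raise_negativesE.
have [xj_ge0 | _] := leP 0 (x 0 j); last by rewrite lerBrDr.
have st_le0 : s + x 0 j0 <= 0 by rewrite -[leRHS](addr0 0) lerD // ltW.
by rewrite (le_trans s_le0 xj_ge0) (le_trans st_le0 xj_ge0).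
Qed.

Lemma raise_superlevel0 : superlevel 0 x \proper superlevel 0 x'.
Proof.
rewrite properE; apply/andP; split.
  by apply/subsetP => j; rewrite !inE raise_negativesE => xj_ge0; rewrite xj_ge0.
apply/subsetPn; exists j0; first by rewrite inE raise_negativesE (leNgt 0 (x 0 j0)) x_j0_lt0 subrr.
by rewrite inE -ltNge.
Qed.

Lemma raise_negativesK : x' + (- x 0 j0) *: (- evec R (~: superlevel 0 x)) = x.
Proof. by rewrite scaleNr scalerN opprK subrK. Qed.

End RaiseStep.

Definition superlevel_flag (Q : {set 'I_n} -> Prop) x (Gs : seq {set 'I_n}) :=
  [/\ sorted (fun A B => A \proper B) Gs,
    forall G, G \in Gs -> [/\ G \proper setT, Q G & superlevel 0 x \subset G]
  & in_cone (cone_gens R id (pos_support x) Gs) x].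

Lemma stellahedral_cone_superlevels (Q : {set 'I_n} -> Prop) x :
  (forall t, t <= 0 -> superlevel t x != setT -> Q (superlevel t x)) ->
  exists Gs, superlevel_flag Q x Gs.
Proof.
have [N] := ubnP #|neg_support x|; elim: N x => // N IH x /ltnSE negx_le Qx.
have [negx0 | [j1 j1_neg]] := set_0Vmem (neg_support x).
  exists [::]; split => //; apply: nonneg_in_cone_pos_support => j.
  by rewrite leNgt; apply/negP => xj_lt0; have := in_set0 j; rewrite -negx0 inE xj_lt0.
rewrite inE in j1_neg.
have [j0 /= j0_neg j0_max] := @arg_maxP _ _ _ j1 [pred j | x 0 j < 0] (fun j => x 0 j) j1_neg.
set t := x 0 j0 in j0_neg j0_max; set x' := raise_negatives x t.
have t_shift s : s <= 0 -> s + t <= 0 by move=> s_le0; rewrite -[leRHS](addr0 0) lerD // ltW.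
have [Gs [Gs_sorted Gs_prop x'_cone]] : exists Gs, superlevel_flag Q x' Gs.
  apply: IH; first exact: leq_trans (proper_card (raise_neg_support j0_neg)) _.
  by move=> s s_le0; rewrite raise_superlevel //; apply/Qx/t_shift.
have L0_proper := raise_superlevel0 j0_neg.
have L0_neqT : superlevel 0 x != setT.
  by apply/eqP => L0T; have := in_setT j0; rewrite -L0T inE leNgt j0_neg.
exists (superlevel 0 x :: Gs); split.
- case: Gs Gs_sorted Gs_prop {x'_cone} => //= G Gs -> /(_ G (mem_head _ _)) [_ _ L0'G].
  by rewrite (proper_sub_trans L0_proper L0'G).
- move=> G; rewrite in_cons => /orP [/eqP -> | /Gs_prop [GT QG L0'G]].
    by split; [rewrite properT | apply: Qx | ].
  by split=> //; apply: subset_trans (proper_sub L0_proper) L0'G.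
rewrite -[X in in_cone _ X](raise_negativesK x j0); apply: in_coneD.
  apply: in_cone_trans x'_cone => v v_gen; apply: in_cone_mem.
  by rewrite cone_gens_cons in_cons -(raise_pos_support j0_max) v_gen orbT.
apply: in_coneZ; first by rewrite oppr_ge0 ltW.
by apply: in_cone_mem; rewrite cone_gens_cons preimset_id mem_head.
Qed.

End Superlevels.

Section StepMinorant.
Local Open Scope ring_scope.
Variables (R : realType) (T : finType) (n : nat) (pi : 'I_n -> T).
Implicit Types (S : {set 'I_n}) (A B : {set T}) (Fs : seq {set T}) (x : 'rV[R]_n).

Definition step_minorant S Fs x : Prop :=
  exists phi : nat -> R, [/\ phi 0%N = 0, {homo phi : k l / (k <= l)%N >-> l <= k}
    & forall j, phi (chain_level Fs (pi j)) <= x 0 j /\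
                (j \notin S -> x 0 j = phi (chain_level Fs (pi j)))].

Lemma cone_step_minorant S Fs x :
  sorted (fun A B => A \proper B) Fs -> cone_of pi S Fs x -> step_minorant S Fs x.
Proof.
move=> /sorted_proper_subset Fs_sorted; apply: in_cone_ind.
- by exists (fun=> 0); split=> // j; rewrite mxE.
- move=> u v [p [p0 p_dec pu]] [q [q0 q_dec qv]].
  exists (fun k => p k + q k); split=> [|k l kl|j]; first by rewrite p0 q0 addr0.
    by rewrite lerD ?p_dec ?q_dec.
  have [pu1 pu2] := pu j; have [qv1 qv2] := qv j.
  by rewrite mxE lerD //; split=> // jS; rewrite pu2 ?qv2.
- move=> c v c_ge0 [p [p0 p_dec pv]]; exists (fun k => c * p k).
  split=> [|k l kl|j]; first by rewrite p0 mulr0.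
    by rewrite ler_wpM2l ?p_dec.
  have [pv1 pv2] := pv j.
  by rewrite mxE ler_wpM2l //; split=> // jS; rewrite pv2.
move=> v; rewrite mem_cat => /orP [/mapP [F F_Fs ->] | /mapP [i iS ->]].
  have kFs : (index F Fs < size Fs)%N by rewrite index_mem.
  exists (fun l => - (index F Fs < l)%:R); split=> [|k l kl|j]; first by rewrite oppr0.
    by rewrite lerN2 ler_nat; case: (ltnP (index F Fs) k) => // /leq_trans->.
  have lev_F : (pi j \notin F) = (index F Fs < chain_level Fs (pi j))%N.
    by rewrite ltnNge -mem_nth_chain // nth_index.
  by rewrite mxE evecE !inE lev_F.
exists (fun=> 0); split=> // j; rewrite evecE inE; split=> // jS.
by case: eqP => // ji; move: iS; rewrite -ji mem_enum (negbTE jS).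
Qed.

End StepMinorant.

Section MultisymmetricLift.
Variables (m n : nat) (pi : 'I_n -> 'I_m) (rk : {set 'I_m} -> nat).
Local Notation lift := (lift_rank pi rk).
Implicit Types (A B C D F : {set 'I_m}) (G J S T U X Y : {set 'I_n}).

Lemma lift_rank_le U A : (lift U <= rk A + #|U :\: pi @^-1: A|)%N.
Proof.
rewrite /lift_rank; have : A \in index_enum {set 'I_m} by rewrite mem_index_enum.
elim: (index_enum _) => // B r IH; rewrite inE big_cons => /orP [/eqP <-|/IH].
  exact: geq_minl.
exact/leq_trans/geq_minr.
Qed.

Lemma lift_rank_ge U c :
  (forall A, c <= rk A + #|U :\: pi @^-1: A|)%N -> (c <= lift U)%N.
Proof.
move=> c_le; apply: (big_ind (fun v => c <= v)%N) => // [|u v cu cv].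
  by have := c_le setT; rewrite preimsetT setDT cards0 addn0.
by rewrite leq_min cu cv.
Qed.

Lemma lift_rank_attained U : exists A, lift U = (rk A + #|U :\: pi @^-1: A|)%N.
Proof.
apply: (big_ind (fun v => exists A, v = rk A + #|U :\: pi @^-1: A|)%N).
- by exists setT; rewrite preimsetT setDT cards0 addn0.
- by move=> u v [A ->] [B ->]; rewrite /minn; case: ifP => _; [exists A | exists B].
- by move=> A _; exists A.
Qed.

Hypothesis rk_set0 : rk set0 = 0%N.
Hypothesis rk_mono : forall A B, A \subset B -> (rk A <= rk B)%N.
Hypothesis rk_submod : forall A B, (rk (A :|: B) + rk (A :&: B) <= rk A + rk B)%N.
Hypothesis rk_fibre : forall i, (rk [set i] <= #|pi @^-1: [set i]|)%N.

Lemma rk_submod_sub A B C D :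
  C \subset A :|: B -> D \subset A :&: B -> (rk C + rk D <= rk A + rk B)%N.
Proof. by move=> CAB DAB; apply/(leq_trans _ (rk_submod A B))/leq_add; apply: rk_mono. Qed.

Lemma rk_setU_preim A C : (rk (A :|: C) <= rk A + #|pi @^-1: C|)%N.
Proof.
have [k] := ubnP #|C|; elim: k C => // k IH C /ltnSE C_le.
have [->|[i iC]] := set_0Vmem C; first by rewrite setU0 leq_addr.
have -> : A :|: C = (A :|: C :\ i) :|: [set i] by rewrite -setUA [_ :|: [set i]]setUC setD1K.
have -> : pi @^-1: C = pi @^-1: (C :\ i) :|: pi @^-1: [set i].
  by rewrite -preimsetU setUC setD1K // sub1set.
rewrite cardsU; have -> : pi @^-1: (C :\ i) :&: pi @^-1: [set i] = set0.
  by apply/setP => j; rewrite !inE andbC andbA; case: eqP.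
rewrite cards0 subn0.
have := rk_submod (A :|: C :\ i) [set i]; have := rk_fibre i.
have := IH (C :\ i); rewrite (cardsD1 i C) iC in C_le; move/(_ C_le); lia.
Qed.

Lemma rk_setU_preimD A F : (rk (A :|: F) <= rk A + #|pi @^-1: (F :\: A)|)%N.
Proof. by rewrite -[A :|: F]setIT -(setUCr A) -setUIr -setDE; apply: rk_setU_preim. Qed.

(* Locked so that [inE] does not unfold membership in it. *)
Fact fibre_core_key : unit. Proof. by []. Qed.
Definition fibre_core G : {set 'I_m} :=
  locked_with fibre_core_key [set i | pi @^-1: [set i] \subset G].
Definition fibre_fringe G : {set 'I_n} := G :\: pi @^-1: fibre_core G.

Lemma mem_fibre_core G i : (i \in fibre_core G) = (pi @^-1: [set i] \subset G).
Proof. by rewrite /fibre_core unlock_with inE. Qed.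

Lemma preim_fibre_core_sub G : pi @^-1: fibre_core G \subset G.
Proof. by apply/subsetP => j; rewrite inE mem_fibre_core => /subsetP; apply; rewrite !inE. Qed.

Lemma fibre_core_mono G G' : G \subset G' -> fibre_core G \subset fibre_core G'.
Proof. by move=> GG'; apply/subsetP => i; rewrite !mem_fibre_core => /subset_trans; apply. Qed.

Lemma lift_rank_flat G :
  is_flat lift G -> lift G = (rk (fibre_core G) + #|fibre_fringe G|)%N.
Proof.
move=> G_flat; apply/eqP; rewrite eqn_leq lift_rank_le /=.
have [A liftG] := lift_rank_attained G.
have AG : pi @^-1: A \subset G.
  apply/subsetP => e eA; apply/negPn/negP => eG.
  have := G_flat e eG; have := lift_rank_le (e |: G) A.
  have -> : (e |: G) :\: pi @^-1: A = G :\: pi @^-1: A.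
    by move: eA; rewrite inE => eA; apply/setP => j; rewrite !inE; case: eqP => // ->; rewrite eA.
  by rewrite -liftG => le lt; have := leq_trans lt le; rewrite ltnn.
have A_core : A \subset fibre_core G.
  apply/subsetP => i iA; rewrite mem_fibre_core; apply: subset_trans AG.
  by apply/subsetP => j; rewrite !inE => /eqP ->.
have := rk_setU_preimD A (fibre_core G); rewrite (setUidPr A_core) liftG.
have : (#|pi @^-1: (fibre_core G :\: A) :|: fibre_fringe G| <= #|G :\: pi @^-1: A|)%N.
  apply/subset_leq_card/subsetP => j; rewrite !inE.
  have /subsetP/(_ j) := preim_fibre_core_sub G; have /subsetP/(_ (pi j)) := A_core.
  by rewrite inE; case: (pi j \in A); case: (pi j \in fibre_core G); case: (j \in G) => //= _ ->.
rewrite cardsU; have -> : pi @^-1: (fibre_core G :\: A) :&: fibre_fringe G = set0.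
  by apply/setP => j; rewrite !inE; case: (pi j \in fibre_core G); rewrite ?andbF.
rewrite cards0 subn0; card_lia rk.
Qed.

Lemma flat_lift_rk_gap G A :
  is_flat lift G ->
  (rk (fibre_core G) + #|fibre_fringe G :&: pi @^-1: A| + ~~ (A \subset fibre_core G)
     <= rk (A :|: fibre_core G))%N.
Proof.
move=> G_flat; have liftG := lift_rank_flat G_flat.
have fringeA := cardsID (pi @^-1: A) (fibre_fringe G).
have outside : G :\: pi @^-1: (A :|: fibre_core G) \subset fibre_fringe G :\: pi @^-1: A.
  by apply/subsetP => j; rewrite !inE negb_or => /andP [/andP [-> ->] ->].
have [A_core | /subsetPn [i iA]] := boolP (A \subset fibre_core G).
  have := lift_rank_le G (A :|: fibre_core G); have := subset_leq_card outside.
  rewrite /= addn0; move: liftG fringeA; card_lia rk lift.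
rewrite mem_fibre_core => /subsetPn [e]; rewrite !inE => /eqP ei eG.
have := G_flat e eG; have := lift_rank_le (e |: G) (A :|: fibre_core G).
have : (#|(e |: G) :\: pi @^-1: (A :|: fibre_core G)| <= #|fibre_fringe G :\: pi @^-1: A|)%N.
  apply/subset_leq_card/subsetP => j; rewrite in_setD in_setU1.
  case: eqP => [-> | _ /= jG]; first by rewrite !inE ei iA.
  by apply: (subsetP outside); rewrite in_setD.
move: liftG fringeA; card_lia rk lift.
Qed.

Lemma is_flat_fibre_core G : is_flat lift G -> is_flat rk (fibre_core G).
Proof.
move=> G_flat i iG; have := flat_lift_rk_gap [set i] G_flat.
by rewrite sub1set iG setUC; card_lia rk.
Qed.

Section FlatPreimU.
Variables (F : {set 'I_m}) (J : {set 'I_n}).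
Hypothesis F_flat : is_flat rk F.
Hypothesis JF : J :&: pi @^-1: F = set0.
Hypothesis J_gap :
  forall T, T \subset J -> T != set0 -> (rk F + #|T| < rk (F :|: pi @: T))%N.

Lemma rk_gap_fringe_preim A i :
  i \notin F -> (rk F + #|J :&: pi @^-1: A| + (i \in A) <= rk (A :|: F))%N.
Proof.
move=> iF; set T := J :&: pi @^-1: A.
have [T0 | T_neq0] := eqVneq T set0.
  rewrite T0 cards0 addn0; case: (boolP (i \in A)) => iA /=; last first.
    by rewrite addn0 rk_mono // subsetUr.
  by rewrite addn1 (leq_trans (F_flat iF)) // rk_mono // setSU // sub1set.
have FT_AF : F :|: pi @: T \subset A :|: F.
  apply/subsetP => k; rewrite !inE => /orP [-> | /imsetP [j]]; first by rewrite orbT.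
  by rewrite !inE => /andP [_ jA] ->; rewrite jA.
have := J_gap (subsetIl J _) T_neq0; have := rk_mono FT_AF.
by case: (i \in A) => /=; card_lia rk.
Qed.

Lemma card_setU1D_preimU e A :
  e \notin pi @^-1: F :|: J ->
  #|(e |: (pi @^-1: F :|: J)) :\: pi @^-1: A| =
    (#|pi @^-1: (F :\: A)| + #|J :\: pi @^-1: A| + (pi e \notin A))%N.
Proof.
move=> eG; rewrite setDUl; have -> : (pi @^-1: F :|: J) :\: pi @^-1: A =
    pi @^-1: (F :\: A) :|: (J :\: pi @^-1: A).
  by apply/setP => j; rewrite !inE; case: (pi j \in A); rewrite ?andbF.
have disj : pi @^-1: (F :\: A) :&: (J :\: pi @^-1: A) = set0.
  apply/setP => j; move/setP: JF => /(_ j); rewrite !inE.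
  by case: (j \in J); case: (pi j \in F); case: (pi j \in A).
case: (boolP (pi e \in A)) => eA.
  have -> : [set e] :\: pi @^-1: A = set0.
    by apply/setP => j; rewrite !inE andbC; case: eqP => //= ->; rewrite eA.
  by rewrite set0U addn0 cardsU disj cards0 subn0.
have -> : [set e] :\: pi @^-1: A = [set e].
  by apply/setP => j; rewrite !inE andbC; case: eqP => //= ->; rewrite eA.
rewrite cardsU1 cardsU disj cards0 subn0 addnC.
have -> // : e \notin pi @^-1: (F :\: A) :|: J :\: pi @^-1: A.
by apply: contraNN eG; rewrite !inE => /orP [/andP [_ ->] | /andP [_ ->]]; rewrite ?orbT.
Qed.

Lemma is_flat_lift_preimU : is_flat lift (pi @^-1: F :|: J).
Proof.
move=> e eG; set G := pi @^-1: F :|: J.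
have liftG : (lift G <= rk F + #|J|)%N.
  apply: leq_trans (lift_rank_le G F) _; rewrite leq_add2l subset_leq_card //.
  by apply/subsetP => j; rewrite !inE; case: (pi j \in F); case: (j \in J).
apply: leq_ltn_trans liftG _; apply: lift_rank_ge => A.
have eF : pi e \notin F by move: eG; rewrite !inE negb_or => /andP [].
rewrite (card_setU1D_preimU A eG).
have := rk_gap_fringe_preim A eF; have := rk_setU_preimD A F.
have := cardsID (pi @^-1: A) J.
by case: (pi e \in A); card_lia rk.
Qed.

End FlatPreimU.

Definition lift_indep X := forall A, (#|X :&: pi @^-1: A| <= rk A)%N.

Lemma lift_indepP X : lift_indep X <-> lift X = #|X|.
Proof.
split=> [X_indep | liftX A]; last first.
  by have := lift_rank_le X A; rewrite liftX -(cardsID (pi @^-1: A) X); card_lia rk.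
apply/eqP; rewrite eqn_leq; apply/andP; split.
  by have := lift_rank_le X set0; rewrite rk_set0 preimset0 setD0.
by apply: lift_rank_ge => A; rewrite -(cardsID (pi @^-1: A) X) leq_add2r.
Qed.

Lemma lift_indep_sub S X :
  (forall T, T \subset S -> (#|T| <= rk (pi @: T))%N) -> X \subset S -> lift_indep X.
Proof.
move=> S_indep XS A; apply: leq_trans (S_indep _ (subset_trans (subsetIl _ _) XS)) _.
by apply/rk_mono/subsetP => i /imsetP [j /setIP [_]]; rewrite inE => pjA ->.
Qed.

Lemma lift_indep_setU_fringe G X :
  is_flat lift G -> X \subset G -> lift_indep X -> lift_indep (X :|: fibre_fringe G).
Proof.
move=> G_flat XG X_indep A; set F := fibre_core G.
have split_A : (X :|: fibre_fringe G) :&: pi @^-1: A \subset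
    (X :&: pi @^-1: (A :&: F)) :|: (fibre_fringe G :&: pi @^-1: A).
  apply/subsetP => j; rewrite !inE => /andP [/orP [jX | jJ] jA]; last by rewrite jJ jA orbT.
  by rewrite jX jA (subsetP XG j jX) /=; case: (pi j \in F).
have := subset_leq_card split_A; have := (leq_card_setU (X :&: pi @^-1: (A :&: F))
  (fibre_fringe G :&: pi @^-1: A)).1; have := X_indep (A :&: F).
have := flat_lift_rk_gap A G_flat; have := rk_submod A F.
by card_lia rk.
Qed.

(* Condition (2) of Sigma_P at F0, stated for all A ⊆ E; take A = pi(T). *)
Definition rk_gap F0 Y := forall A, ~~ (A \subset F0) ->
  (rk F0 + #|(Y :\: pi @^-1: F0) :&: pi @^-1: A| < rk (A :|: F0))%N.

Lemma rk_gap_setU_fringe F0 G X :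
  is_flat lift G -> X \subset G -> F0 \subset fibre_core G ->
  rk_gap F0 X -> rk_gap F0 (X :|: fibre_fringe G).
Proof.
move=> G_flat XG F0F X_gap A AF0; set F := fibre_core G.
have split_A : ((X :|: fibre_fringe G) :\: pi @^-1: F0) :&: pi @^-1: A \subset
    ((X :\: pi @^-1: F0) :&: pi @^-1: (A :&: F)) :|: (fibre_fringe G :&: pi @^-1: A).
  apply/subsetP => j; rewrite !inE => /andP [/andP [jF0 /orP [jX | jJ]] jA].
    by rewrite jX jA jF0 (subsetP XG j jX) /=; case: (pi j \in F).
  by rewrite jJ jA orbT.
have := subset_leq_card split_A; have := (leq_card_setU
  ((X :\: pi @^-1: F0) :&: pi @^-1: (A :&: F)) (fibre_fringe G :&: pi @^-1: A)).1.
have := flat_lift_rk_gap A G_flat; rewrite -/F.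
have AF_F : A :|: F \subset (A :|: F0) :|: F by rewrite -setUA setUS // subsetUr.
have [AF_F0 | /X_gap] := boolP (A :&: F \subset F0).
  have -> : (X :\: pi @^-1: F0) :&: pi @^-1: (A :&: F) = set0.
    apply/setP => j; rewrite !inE; apply/negbTE/negP => /and3P [/andP [jF0 _] pjA pjF].
    by move: jF0; rewrite (subsetP AF_F0 (pi j)) // inE pjA pjF.
  have -> : ~~ (A \subset F).
    by apply: contra AF0 => AF; apply: subset_trans AF_F0; rewrite subsetI AF subxx.
  have F0_AF : F0 \subset (A :|: F0) :&: F by rewrite subsetI subsetUr F0F.
  by have := rk_submod_sub AF_F F0_AF; rewrite cards0; card_lia rk.
have AFF0 : (A :&: F) :|: F0 \subset (A :|: F0) :&: F.
  apply/subsetP => i; rewrite !inE => /orP [/andP [-> ->] // | iF0].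
  by rewrite iF0 orbT (subsetP F0F _ iF0).
by have := rk_submod_sub AF_F AFF0; card_lia rk.
Qed.

Definition lift_support X (Gs : seq {set 'I_n}) := X :|: \bigcup_(G <- Gs) fibre_fringe G.

Lemma lift_support_cons X G Gs :
  lift_support X (G :: Gs) = lift_support (X :|: fibre_fringe G) Gs.
Proof. by rewrite /lift_support big_cons setUA. Qed.

Lemma fringe_sub_lift_support X Gs G : G \in Gs -> fibre_fringe G \subset lift_support X Gs.
Proof.
by move=> G_Gs; rewrite /lift_support bigcup_seq subsetU // (bigcup_sup G) ?orbT.
Qed.

Lemma setU_fringe_sub_tail G Gs X :
  path (fun G G' => G \subset G') G Gs -> X \subset G ->
  forall G', G' \in Gs -> X :|: fibre_fringe G \subset G'.
Proof.
move=> Gs_path XG G' /(path_subset_head Gs_path) GG'.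
by rewrite subUset (subset_trans XG GG') (subset_trans (subsetDl _ _) GG').
Qed.

Lemma lift_support_ind (P : {set 'I_n} -> Prop) Gs X :
  sorted (fun G G' => G \subset G') Gs -> (forall G, G \in Gs -> X \subset G) ->
  (forall G Y, G \in Gs -> Y \subset G -> P Y -> P (Y :|: fibre_fringe G)) ->
  P X -> P (lift_support X Gs).
Proof.
elim: Gs X => [|G Gs IH] X Gs_sorted XGs P_step PX.
  by rewrite /lift_support big_nil setU0.
rewrite lift_support_cons; apply: IH (path_sorted Gs_sorted) _ _ _.
- exact: setU_fringe_sub_tail Gs_sorted (XGs G (mem_head _ _)).
- by move=> G' Y G'_Gs; apply: P_step; rewrite in_cons G'_Gs orbT.
- exact: P_step (mem_head _ _) (XGs G (mem_head _ _)) PX.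
Qed.

Lemma rk_gap_fringe G X :
  is_flat lift G -> X \subset G -> rk_gap (fibre_core G) (X :|: fibre_fringe G).
Proof.
move=> G_flat XG A AF; have := flat_lift_rk_gap A G_flat; rewrite AF setUC.
have : ((X :|: fibre_fringe G) :\: pi @^-1: fibre_core G) :&: pi @^-1: A \subset
    fibre_fringe G :&: pi @^-1: A.
  apply/subsetP => j; rewrite !inE => /andP [/andP [jF /orP [jX | ->]] ->] //.
  by rewrite jF (subsetP XG j jX).
by move/subset_leq_card; card_lia rk.
Qed.

Lemma lift_support_rk_gap Gs X G0 :
  sorted (fun G G' => G \subset G') Gs -> (forall G, G \in Gs -> is_flat lift G) ->
  (forall G, G \in Gs -> X \subset G) -> G0 \in Gs ->
  rk_gap (fibre_core G0) (lift_support X Gs).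
Proof.
elim: Gs X => // G Gs IH X Gs_sorted Gs_flat XGs.
have Gs'_flat G' : G' \in Gs -> is_flat lift G'.
  by move=> G'_Gs; apply: Gs_flat; rewrite in_cons G'_Gs orbT.
have XG := XGs G (mem_head _ _); have tail_sub := setU_fringe_sub_tail Gs_sorted XG.
rewrite lift_support_cons in_cons => /orP [/eqP -> | G0_Gs].
  apply: lift_support_ind (path_sorted Gs_sorted) tail_sub _ _.
    move=> G' Y G'_Gs YG'; apply: rk_gap_setU_fringe YG' _; first exact: Gs'_flat.
    exact/fibre_core_mono/(path_subset_head Gs_sorted).
  exact: rk_gap_fringe (Gs_flat G (mem_head _ _)) XG.
exact: IH (path_sorted Gs_sorted) Gs'_flat tail_sub G0_Gs.
Qed.

Lemma fibre_core_proper G : G \proper setT -> fibre_core G \proper setT.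
Proof.
rewrite !properT; apply: contraNneq => coreT; rewrite eqEsubset subsetT /=.
by rewrite -(preimsetT pi) -coreT preim_fibre_core_sub.
Qed.

Lemma lift_indep_card_image X T : lift_indep X -> T \subset X -> (#|T| <= rk (pi @: T))%N.
Proof.
move=> X_indep TX; apply: leq_trans (X_indep (pi @: T)); apply/subset_leq_card/subsetP.
by move=> j jT; rewrite inE (subsetP TX j jT) inE imset_f.
Qed.

Lemma rk_gap_compatible F Y A : rk_gap F Y -> pi @^-1: A \subset Y -> A \subset F.
Proof.
move=> Y_gap AY; apply/subsetP => i iA; apply/negPn/negP => iF.
have := Y_gap [set i]; rewrite sub1set iF setUC => /(_ isT).
have : pi @^-1: [set i] \subset (Y :\: pi @^-1: F) :&: pi @^-1: [set i].
  apply/subsetP => j; rewrite !inE => /eqP pji; rewrite pji eqxx iF andbT /=.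
  by apply: (subsetP AY); rewrite inE pji.
move/subset_leq_card; have := rk_setU_preim F [set i]; card_lia rk.
Qed.

Lemma rk_gap_augment F Y T :
  rk_gap F Y -> T \subset Y :\: pi @^-1: F -> T != set0 ->
  (rk F + #|T| < rk (F :|: pi @: T))%N.
Proof.
move=> Y_gap TY /set0Pn [j jT]; rewrite setUC; apply: leq_trans (Y_gap _ _).
  rewrite ltnS leq_add2l; apply/subset_leq_card/subsetP => k kT.
  by rewrite inE (subsetP TY k kT) inE imset_f.
apply/subsetPn; exists (pi j); first exact: imset_f.
by have := subsetP TY j jT; rewrite !inE => /andP [].
Qed.

Lemma Sigma_M_coarsening_idx I Gs :
  Sigma_M_idx lift I Gs -> Sigma_P_idx pi rk (lift_support I Gs) (undup (map fibre_core Gs)).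
Proof.
move=> [[[Gs_sorted Gs_proper] _] I_indep Gs_flat I_bottom].
have Gs_sub := sorted_proper_subset Gs_sorted.
have IGs G : G \in Gs -> I \subset G.
  by move=> G_Gs; apply: subset_trans I_bottom (chain_bottom_sub Gs_sub G_Gs).
have S_indep : lift_indep (lift_support I Gs).
  apply: lift_support_ind Gs_sub IGs _ _; last exact/lift_indepP.
  by move=> G Y G_Gs; apply/lift_indep_setU_fringe/Gs_flat.
have S_gap := lift_support_rk_gap Gs_sub Gs_flat IGs.
have memFs F : F \in undup (map fibre_core Gs) -> exists2 G, G \in Gs & F = fibre_core G.
  by rewrite mem_undup => /mapP.
split.
- split; first split.
  + by apply/sorted_undup_proper; rewrite sorted_map; apply: sub_sorted Gs_sub => G G';
      apply: fibre_core_mono.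
  + by move=> _ /memFs [G G_Gs ->]; apply/fibre_core_proper/Gs_proper.
  + move=> A AS; apply: sub_chain_bottom => _ /memFs [G G_Gs ->].
    exact: rk_gap_compatible (S_gap G G_Gs) AS.
- by move=> _ /memFs [G G_Gs ->]; apply/is_flat_fibre_core/Gs_flat.
- by move=> T; apply: lift_indep_card_image.
move=> F; rewrite mem_rcons in_cons => /orP [/eqP -> T | /memFs [G G_Gs ->]].
  by rewrite preimsetT setDT subset0 => /eqP ->; rewrite eqxx.
by move=> T TS; apply: rk_gap_augment (S_gap G G_Gs) TS.
Qed.

Variable R : realType.
Implicit Types (x : 'rV[R]_n) (t : R).

Lemma pos_support_sub S Fs x : step_minorant pi S Fs x -> pos_support x \subset S.
Proof.
move=> [phi [phi0 phi_dec x_phi]]; apply/subsetP => j; rewrite inE.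
apply: contraTT => jS; have [_ /(_ jS) ->] := x_phi j.
by rewrite -leNgt -phi0 phi_dec.
Qed.

Lemma superlevel_is_flat_lift S Fs x :
  Sigma_P_idx pi rk S Fs -> step_minorant pi S Fs x -> forall t, (t <= 0)%R ->
  superlevel t x != setT -> is_flat lift (superlevel t x).
Proof.
move=> [[[Fs_sorted _] _] Fs_flat _ Fs_gap] [phi [phi0 phi_dec x_phi]] t t_le0 L_neqT.
set F := [set i | (t <= phi (chain_level Fs i))%R].
set J := superlevel t x :\: pi @^-1: F.
have FL : pi @^-1: F \subset superlevel t x.
  by apply/subsetP => j; rewrite !inE => /le_trans; apply; case: (x_phi j).
have L_FJ : superlevel t x = pi @^-1: F :|: J.
  apply/setP => j; rewrite !inE; case: (boolP (t <= phi _)%R) => //= t_phi.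
  by rewrite (le_trans t_phi) //; case: (x_phi j).
have JS : J \subset S.
  apply/subsetP => j; rewrite !inE => /andP [jF]; apply: contraTT => jS.
  by have [_ /(_ jS) ->] := x_phi j.
have [FT | F_Fs] := superlevel_chain (sorted_proper_subset Fs_sorted) phi0 phi_dec t_le0.
  by move: L_neqT; rewrite L_FJ /F FT preimsetT setTU eqxx.
rewrite L_FJ; apply: is_flat_lift_preimU; first exact: Fs_flat.
  by apply/setP => j; rewrite !inE; case: (_ <= _)%R; rewrite ?andbF.
move=> T TJ T_neq0; apply: (Fs_gap F _ T _ T_neq0); first by rewrite mem_rcons in_cons F_Fs orbT.
apply/subsetP => j /(subsetP TJ) jJ; rewrite inE (subsetP JS j jJ).
by move: jJ; rewrite inE andbT => /andP [].
Qed.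

Lemma Sigma_P_cone_in_Sigma_M S Fs x :
  Sigma_P_idx pi rk S Fs -> cone_of pi S Fs x ->
  exists I Gs, Sigma_M_idx lift I Gs /\ cone_of id I Gs x.
Proof.
move=> SFs x_cone; have [[[Fs_sorted _] _] _ S_indep _] := SFs.
have x_step := cone_step_minorant Fs_sorted x_cone.
have [Gs [Gs_sorted Gs_prop x_Gs]] :=
  stellahedral_cone_superlevels (superlevel_is_flat_lift SFs x_step).
have pos_bottom : pos_support x \subset chain_bottom Gs.
  apply: sub_chain_bottom => G /Gs_prop [_ _]; apply: subset_trans.
  by apply/subsetP => j; rewrite !inE => /ltW.
exists (pos_support x), Gs; split=> //; split.
- split; first by split=> // G /Gs_prop [].
  by move=> A; rewrite preimset_id => /subset_trans; apply.
- exact/lift_indepP/(lift_indep_sub S_indep)/pos_support_sub/x_step.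
- by move=> G /Gs_prop [].
- exact: pos_bottom.
Qed.

Lemma Sigma_M_coarsening_cone I Gs x :
  cone_of id I Gs x -> cone_of pi (lift_support I Gs) (undup (map fibre_core Gs)) x.
Proof.
have gen_j j : j \in lift_support I Gs ->
    evec R [set j] \in cone_gens R pi (lift_support I Gs) (undup (map fibre_core Gs)).
  by move=> jS; rewrite mem_cat; apply/orP; right; apply/mapP; exists j; rewrite ?mem_enum.
apply: in_cone_trans => v; rewrite mem_cat => /orP [/mapP [G G_Gs ->] | /mapP [j jI ->]].
  rewrite preimset_id (oppr_evecC_split R (preim_fibre_core_sub G)); apply: in_coneD.
    apply: in_cone_mem; rewrite mem_cat; apply/orP; left; apply/mapP.
    by exists (fibre_core G); rewrite // mem_undup map_f.
  rewrite evec_sum1; apply: in_cone_sum => j jJ; apply/in_cone_mem/gen_j.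
  exact: (subsetP (fringe_sub_lift_support I G_Gs)).
by apply/in_cone_mem/gen_j; rewrite (subsetP (subsetUl _ _)) // -mem_enum.
Qed.

Lemma Sigma_M_cone_coarsened I Gs :
  Sigma_M_idx lift I Gs -> exists S Fs, Sigma_P_idx pi rk S Fs /\
    forall x, cone_of id I Gs x -> cone_of pi S Fs x.
Proof.
move=> IGs; exists (lift_support I Gs), (undup (map fibre_core Gs)).
by split; [apply: Sigma_M_coarsening_idx | apply: Sigma_M_coarsening_cone].
Qed.

End MultisymmetricLift.

Theorem theorem3p8 (R : realType) (m n : nat) (a : 'I_m -> nat)
  (pi : 'I_n -> 'I_m) (rk : {set 'I_m} -> nat) :
  (forall i : 'I_m, #|pi @^-1: [set i]| = a i) ->
  n = (\sum_(i < m) a i)%N ->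
  polymatroid a rk ->
  (* equal supports *)
  (forall x : 'rV[R]_n,
     (exists S Fs, Sigma_P_idx pi rk S Fs /\ cone_of pi S Fs x) <->
     (exists I Fs, Sigma_M_idx (lift_rank pi rk) I Fs /\ cone_of id I Fs x)) /\
  (* Sigma_P coarsens Sigma_{M_pi(P)}: every cone of the latter lies in a cone of the former *)
  (forall I Fs, Sigma_M_idx (lift_rank pi rk) I Fs ->
     exists S Gs, Sigma_P_idx pi rk S Gs /\
       (forall x : 'rV[R]_n, cone_of id I Fs x -> cone_of pi S Gs x)).
Proof.
move=> fibre_card _ [rk_set0 rk_mono rk_submod rk_a].
have rk_fibre i : (rk [set i] <= #|pi @^-1: [set i]|)%N by rewrite fibre_card rk_a.
have coarsened := Sigma_M_cone_coarsened rk_set0 rk_mono rk_submod rk_fibre R.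
split=> // x; split=> [[S [Fs [SFs x_cone]]] | [I [Fs [IFs x_cone]]]].
  exact: Sigma_P_cone_in_Sigma_M rk_set0 rk_mono rk_submod rk_fibre _ _ _ _ SFs x_cone.
by have [S [Gs [SGs Fs_Gs]]] := coarsened I Fs IFs; exists S, Gs; split; last exact: Fs_Gs.
Qed.
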